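(* Let $\nu$ be a finite positive Borel measure on the unit circle $\mathbb T$ whose support is infinite, and let $m_k=\int_{\mathbb T}z^k\,d\nu(z)$ for $k\ge0$. For each $N\ge1$ let $r_N\in[0,1)$ be the unique number for which $m_k=r_N^k\sum_{\alpha=1}^N\rho_\alpha e^{ik\phi_\alpha}$ ($k=0,\dots,N$) is solvable with $\rho_\alpha\ge0$, $\phi_\alpha\in[-\pi,\pi)$. Then the sequence $(r_N)_{N\ge1}$ is nondecreasing; in particular $\lim_{N\to\infty}r_N$ exists in $[0,1]$.
   Context: Equivalently, for $(m_1,\dots,m_N)\ne0$, $r_N$ is the unique $r\in(0,1)$ such that the minimum eigenvalue $\lambda(r;N)$ of the Hermitian Toeplitz matrix $H_N(\bm M_N^*(r))$ is $0$, where $\bm M_N^*(r)=(m_0,m_1r^{-1},\dots,m_Nr^{-N})$, $m_{-k}=\overline{m_k}$, and $H_N(\bm M)=(m_{l-j})_{j,l=0}^N$ (first row $(m_0,\dots,m_N)$, first column $(m_0,\overline{m_1},\dots,\overline{m_N})^T$); if $m_1=\dots=m_N=0$ then $r_N=0$. *)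

From HB Require Import structures.
From mathcomp Require Import all_boot all_order all_algebra.
From mathcomp Require Import all_classical all_reals all_analysis.
From mathcomp Require Import complex.
Set Implicit Arguments. Unset Strict Implicit. Unset Printing Implicit Defensive.
Import Order.TTheory GRing.Theory Num.Theory.
Import numFieldNormedType.Exports.
Local Open Scope classical_set_scope.
Local Open Scope ring_scope.
Local Open Scope complex_scope.

(* The plane R^2 is modeled as (R * R) with its product (= Borel) sigma-algebra;
   a point p corresponds to the complex number p.1 + i p.2. *)
Definition cpt {R : rcfType} (p : R * R) : R[i] := p.1 +i* p.2.

Definition unit_circle {R : realType} : set (R * R) :=
  [set p | p.1 ^+ 2 + p.2 ^+ 2 = 1].

Definition msupport {R : realType}
    (nu : {measure set (R * R)%type -> \bar R}) : set (R * R) :=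
  [set z | forall e : R, 0 < e -> (0 < nu (ball z e))%E].

Definition moment {R : realType}
    (nu : {measure set (R * R)%type -> \bar R}) (k : nat) : R[i] :=
  (Rintegral nu setT (fun p => complex.Re (cpt p ^+ k)))
    +i* (Rintegral nu setT (fun p => complex.Im (cpt p ^+ k))).

Definition expi {R : realType} (t : R) : R[i] := cos t +i* sin t.

Definition solvable {R : realType}
    (nu : {measure set (R * R)%type -> \bar R}) (N : nat) (r : R) : Prop :=
  exists (rho phi : 'I_N -> R),
    (forall a, 0 <= rho a) /\ (forall a, - pi <= phi a < pi) /\
    forall k : nat, (k <= N)%N ->
      moment nu k = (r%:C) ^+ k * \sum_(a < N) (rho a)%:C * expi (k%:R * phi a).

From HB Require Import structures.
From mathcomp Require Import all_boot all_order all_algebra.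
From mathcomp Require Import all_classical all_reals all_analysis.
From mathcomp Require Import complex ring.
Import Order.TTheory GRing.Theory Num.Theory.
Import numFieldNormedType.Exports.
Local Open Scope classical_set_scope.
Local Open Scope complex_scope.
Local Open Scope ring_scope.

(* Suppose r_M < r_N with N <= M and put t := r_M / r_N < 1.  The two representations
   of m_0, ..., m_N give \sum_a rho_a w_a^k = t^k \sum_b sig_b v_b^k for k <= N, with
   unimodular atoms w, v.  Evaluate the Hermitian Toeplitz form of these moments at the
   coefficients c of p = \prod_a (X - w_a).  On the left it is \sum_a rho_a |p(w_a)|^2 = 0.
   On the right it is \sum_b sig_b times the Kac-Murdock-Szego form (t^|j-l|) evaluated
   at (c_j v_b^j)_j; a Cholesky factorisation of that matrix bounds it below by
   (1 - t^2) |c_N v_b^N|^2 = 1 - t^2, so the right side is positive since the support is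
   nonempty.  Convergence of (r_N) is then that of a bounded monotone sequence. *)

Section Expi.
Context {R : realType}.

Lemma expi0 : expi (0 : R) = 1.
Proof. by rewrite /expi cos0 sin0. Qed.

Lemma expiD (x y : R) : expi (x + y) = expi x * expi y.
Proof. by rewrite /expi cosD sinD /=; congr (_ +i* _); ring. Qed.

Lemma expi_natrM (k : nat) (x : R) : expi (k%:R * x) = expi x ^+ k.
Proof.
elim: k => [|k IHk]; first by rewrite mul0r expi0 expr0.
by rewrite -addn1 natrD mulrDl mul1r expiD IHk exprD expr1.
Qed.

Lemma expi_mulconj (x : R) : expi x * (expi x)^* = 1.
Proof.
rewrite /expi /=; apply/eqP; rewrite eq_complex /=; apply/andP; split; apply/eqP.
  by rewrite -(cos2Dsin2 x); ring.
by ring.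
Qed.

End Expi.

Lemma conjC_realc (R : rcfType) (a : R) : Num.conj (a%:C : R[i]) = a%:C.
Proof. exact: conjc_real. Qed.

Section KacMurdockSzego.
Context {R : rcfType} (t : R).

Definition kms_weight (i : nat) : R := if i == 0%N then 1 else 1 - t ^+ 2.

Definition kms_factor (i j : nat) : R := if (i <= j)%N then t ^+ (j - i) else 0.

Lemma kms_weight_ge0 i : 0 <= t <= 1 -> 0 <= kms_weight i.
Proof.
move=> /andP[t0 t1]; rewrite /kms_weight; case: (i == 0%N) => //.
by rewrite subr_ge0 expr2 mulr_ile1.
Qed.

Lemma kms_telescope m d :
  \sum_(0 <= i < m.+1) kms_weight i * (t ^+ (m + d - i) * t ^+ (m - i)) = t ^+ d.
Proof.
elim: m => [|m IHm].
  by rewrite big_nat1 /kms_weight /= add0n !subn0 expr0 mulr1 mul1r.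
rewrite big_nat_recr //= subnn addKn expr0 mulr1 {2}/kms_weight /=.
rewrite (eq_big_nat _ _ (F2 := fun i =>
  t ^+ 2 * (kms_weight i * (t ^+ (m + d - i) * t ^+ (m - i))))).
  by rewrite -mulr_sumr IHm; ring.
move=> i /andP[_ le_im]; rewrite ltnS in le_im.
have le_imd : (i <= m + d)%N := leq_trans le_im (leq_addr d m).
by rewrite addSn !subSn // !exprS; ring.
Qed.

(* The KMS matrix (t^|j - l|) factors as A^T diag(kms_weight) A with A upper unitriangular. *)
Lemma kms_cholesky n j l : (j <= n)%N -> (l <= n)%N ->
  \sum_(i < n.+1) kms_weight i * (kms_factor i j * kms_factor i l) = t ^+ `|j - l|%N.
Proof.
wlog lj : j l / (l <= j)%N => [hwlog jn ln|jn _].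
  case: (leqP l j) => [lj|/ltnW jl]; first exact: hwlog.
  rewrite distnC -hwlog //; apply: eq_bigr => i _; by rewrite [_ * kms_factor i l]mulrC.
rewrite distnEl // -(big_mkord xpredT (fun i => kms_weight i * (kms_factor i j * kms_factor i l))).
rewrite (big_cat_nat _ (n := l.+1)) //=; last by rewrite ltnS (leq_trans lj jn).
rewrite [X in _ + X]big1_seq ?addr0; last first.
  move=> i /andP[_]; rewrite mem_index_iota => /andP[lt_li _].
  by rewrite /kms_factor (leqNgt i l) lt_li /= !mulr0.
move: (j - l)%N (subnKC lj) => d <-; rewrite -(kms_telescope l d).
apply: eq_big_nat => i /andP[_]; rewrite ltnS => le_il.
by rewrite /kms_factor le_il (leq_trans le_il (leq_addr _ _)).
Qed.

Definition kms_form {n} (x : 'I_n.+1 -> R[i]) : R[i] :=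
  \sum_(j < n.+1) \sum_(l < n.+1) x j * (x l)^* * (t ^+ `|j - l|%N)%:C.

Lemma kms_form_sum_sqr n (x : 'I_n.+1 -> R[i]) :
  let y i := \sum_(j < n.+1) (kms_factor i j)%:C * x j in
  kms_form x = \sum_(i < n.+1) (kms_weight i)%:C * (y i * (y i)^*).
Proof.
move=> y; have expand_sqr (i : 'I_n.+1) : (kms_weight i)%:C * (y i * (y i)^*) =
    \sum_(j < n.+1) \sum_(l < n.+1)
      x j * (x l)^* * (kms_weight i * (kms_factor i j * kms_factor i l))%:C.
  rewrite /y rmorph_sum /= mulr_suml mulr_sumr; apply: eq_bigr => j _.
  rewrite !mulr_sumr; apply: eq_bigr => l _.
  by rewrite !rmorphM /= conjC_realc; ring.
rewrite [RHS](eq_bigr _ (fun i _ => expand_sqr i)) [RHS]exchange_big /=.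
apply: eq_bigr => j _; rewrite [RHS]exchange_big /=; apply: eq_bigr => l _.
by rewrite -mulr_sumr -rmorph_sum kms_cholesky // -ltnS.
Qed.

Lemma kms_form_ge n (x : 'I_n.+1 -> R[i]) : 0 <= t <= 1 ->
  (1 - t ^+ 2)%:C * (x ord_max * (x ord_max)^*) <= kms_form x.
Proof.
move=> t01; rewrite kms_form_sum_sqr (bigD1 ord_max) //= -[X in X <= _]addr0.
apply: lerD; last first.
  by apply: sumr_ge0 => i _; rewrite mulr_ge0 ?mul_conjC_ge0 // lecR kms_weight_ge0.
have -> : \sum_(j < n.+1) (kms_factor n j)%:C * x j = x ord_max.
  rewrite (bigD1 ord_max) //= big1 ?addr0 => [|j].
    by rewrite /kms_factor leqnn subnn expr0 mul1r.
  rewrite -val_eqE /= => ne_jn.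
  have lt_jn : (j < n)%N by rewrite ltn_neqAle ne_jn -ltnS ltn_ord.
  by rewrite /kms_factor leqNgt lt_jn mul0r.
rewrite ler_wpM2r ?mul_conjC_ge0 // lecR /kms_weight; case: (n == 0%N) => //.
by rewrite gerBl sqr_ge0.
Qed.

End KacMurdockSzego.

Lemma kms_form1 (R : rcfType) n (x : 'I_n.+1 -> R[i]) :
  kms_form 1 x = (\sum_(j < n.+1) x j) * (\sum_(j < n.+1) x j)^*.
Proof.
rewrite mulr_suml; apply: eq_bigr => j _.
by rewrite rmorph_sum mulr_sumr; apply: eq_bigr => l _; rewrite expr1n mulr1.
Qed.

Section Toeplitz.
Context {R : rcfType}.
Implicit Types (w : R[i]) (mu : nat -> R[i]).

Lemma unimodular_expB w j l : w * w^* = 1 -> (l <= j)%N ->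
  w ^+ (j - l) = w ^+ j * (w ^+ l)^*.
Proof.
move=> unit_w lj; rewrite -{2}(subnK lj) exprD -mulrA rmorphXn -exprMn unit_w.
by rewrite expr1n mulr1.
Qed.

Lemma unimodular_toeplitz_entry w j l : w * w^* = 1 ->
  (if (l <= j)%N then w ^+ (j - l) else (w ^+ (l - j))^*) = w ^+ j * (w ^+ l)^*.
Proof.
move=> unit_w; case: leqP => [lj|/ltnW jl]; first exact: unimodular_expB.
by rewrite unimodular_expB // rmorphM /= conjCK mulrC.
Qed.

Definition toeplitz_form mu {n} (c : 'I_n.+1 -> R[i]) : R[i] :=
  \sum_(j < n.+1) \sum_(l < n.+1) c j * (c l)^* *
    (if (l <= j)%N then mu (j - l)%N else (mu (l - j)%N)^*).

Lemma eq_toeplitz_form mu mu' n (c : 'I_n.+1 -> R[i]) :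
  (forall k, (k <= n)%N -> mu k = mu' k) ->
  toeplitz_form mu c = toeplitz_form mu' c.
Proof.
move=> eq_mu; apply: eq_bigr => j _; apply: eq_bigr => l _.
by rewrite !eq_mu // (leq_trans (leq_subr _ _)) // -ltnS.
Qed.

(* The moments of the measure \sum_a rho_a delta_(s w_a). *)
Definition atomic_moment (s : R) {K} (rho : 'I_K -> R) (w : 'I_K -> R[i]) (k : nat) :=
  (s ^+ k)%:C * \sum_(a < K) (rho a)%:C * w a ^+ k.

Lemma toeplitz_form_atomic s K rho (w : 'I_K -> R[i]) n (c : 'I_n.+1 -> R[i]) :
  (forall a, w a * (w a)^* = 1) ->
  toeplitz_form (atomic_moment s rho w) c =
  \sum_(a < K) (rho a)%:C * kms_form s (fun j => c j * w a ^+ j).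
Proof.
move=> unit_w; under [RHS]eq_bigr do rewrite mulr_sumr.
rewrite [RHS]exchange_big; apply: eq_bigr => j _.
under [RHS]eq_bigr do rewrite mulr_sumr.
rewrite [RHS]exchange_big; apply: eq_bigr => l _.
have -> : (if (l <= j)%N then atomic_moment s rho w (j - l)
           else (atomic_moment s rho w (l - j))^*) =
    \sum_(a < K) (rho a)%:C * (s ^+ `|j - l|%N)%:C *
      (if (l <= j)%N then w a ^+ (j - l) else (w a ^+ (l - j))^*).
  rewrite /atomic_moment; case: leqP => [lj|/ltnW jl].
    by rewrite distnEl // mulr_sumr; apply: eq_bigr => a _; ring.
  rewrite distnEr // rmorphM rmorph_sum /= conjC_realc mulr_sumr.
  by apply: eq_bigr => a _; rewrite rmorphM /= conjC_realc; ring.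
rewrite mulr_sumr; apply: eq_bigr => a _.
by rewrite unimodular_toeplitz_entry // rmorphM; ring.
Qed.

Lemma atomic_moment_scale_ge1 N M (t : R) (rho : 'I_N -> R) (w : 'I_N -> R[i])
    (sig : 'I_M -> R) (v : 'I_M -> R[i]) :
  0 <= t -> (forall b, 0 <= sig b) -> 0 < \sum_(b < M) sig b ->
  (forall a, w a * (w a)^* = 1) -> (forall b, v b * (v b)^* = 1) ->
  (forall k, (k <= N)%N -> atomic_moment 1 rho w k = atomic_moment t sig v k) ->
  1 <= t.
Proof.
move=> t0 sig0 sig_gt0 unit_w unit_v eq_mom; rewrite leNgt; apply/negP => t_lt1.
pose p : {poly R[i]} := \prod_(a <- enum 'I_N) ('X - (w a)%:P).
have size_p : size p = N.+1 by rewrite size_prod_XsubC size_enum_ord.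
have lead_p : p`_N = 1.
  by have := monicP (monic_prod_XsubC (enum 'I_N) xpredT w); rewrite /lead_coef size_p.
have root_p a : p.[w a] = 0.
  apply/rootP; rewrite /p -(big_map w xpredT (fun z => 'X - z%:P)) root_prod_XsubC.
  by apply: map_f; rewrite mem_enum.
pose c (j : 'I_N.+1) := p`_j.
have horner_c z : \sum_(j < N.+1) c j * z ^+ j = p.[z].
  by rewrite (horner_coef_wide _ (leqnn _)) size_p.
have form_rho : toeplitz_form (atomic_moment 1 rho w) c = 0.
  rewrite toeplitz_form_atomic //; apply: big1 => a _.
  by rewrite kms_form1 horner_c root_p mul0r mulr0.
have t01 : 0 <= t <= 1 by rewrite t0 ltW.
have form_sig : ((\sum_(b < M) sig b) * (1 - t ^+ 2))%:C <=
    toeplitz_form (atomic_moment t sig v) c.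
  rewrite toeplitz_form_atomic // rmorphM rmorph_sum /= mulr_suml.
  apply: ler_sum => b _; rewrite ler_wpM2l ?lecR //.
  apply: le_trans (kms_form_ge t _ _ t01).
  by rewrite /c /= lead_p mul1r rmorphXn -exprMn unit_v expr1n mulr1.
move: form_sig; rewrite -(eq_toeplitz_form _ _ _ c eq_mom) form_rho lecR leNgt.
by rewrite mulr_gt0 // subr_gt0 expr_lt1.
Qed.

End Toeplitz.

Section Moments.
Context {R : realType} (nu : {finite_measure set (R * R)%type -> \bar R}).

Lemma moment0 : moment nu 0 = (fine (nu setT))%:C.
Proof.
rewrite /moment; under eq_fun do rewrite expr0.
by rewrite !Rintegral_cst // mul1r mul0r.
Qed.

Lemma mass_gt0 : msupport nu !=set0 -> 0 < fine (nu setT).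
Proof.
case=> z /(_ 1 ltr01) ball_gt0.
have mball : measurable (ball z 1 : set (R * R)).
  change (measurable (ball z.1 1 `*` ball z.2 1)).
  by apply: measurableX; exact: measurable_realfun.measurable_ball.
rewrite -lte_fin fineK ?fin_num_measure //.
by apply: lt_le_trans ball_gt0 _; apply: le_measure; rewrite ?inE.
Qed.

Lemma solvable_atomic N r : solvable nu N r ->
  exists (rho : 'I_N -> R) (w : 'I_N -> R[i]),
    [/\ forall a, 0 <= rho a, forall a, w a * (w a)^* = 1 &
        forall k, (k <= N)%N -> moment nu k = atomic_moment r rho w k].
Proof.
case=> rho [phi [rho0 [_ mom]]]; exists rho, (fun a => expi (phi a)); split=> //.
  by move=> a; exact: expi_mulconj.
move=> k kN; rewrite mom // /atomic_moment rmorphXn.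
by congr (_ * _); apply: eq_bigr => a _; rewrite expi_natrM.
Qed.

Lemma solvable_radius_le N M a b : (N <= M)%N -> 0 <= b -> 0 < fine (nu setT) ->
  solvable nu N a -> solvable nu M b -> a <= b.
Proof.
move=> NM b0 mass_gt0 /solvable_atomic[rho [w [_ unit_w momN]]].
move=> /solvable_atomic[sig [v [sig0 unit_v momM]]].
rewrite leNgt; apply/negP => ba; have a_gt0 : 0 < a by apply: le_lt_trans ba.
have sig_mass : \sum_(b < M) sig b = fine (nu setT).
  have := momM 0%N (leq0n M); rewrite moment0 /atomic_moment expr0 mul1r.
  by under eq_bigr do rewrite expr0 mulr1; rewrite -rmorph_sum => /complexI.
suff : 1 <= b / a by rewrite ler_pdivlMr // mul1r leNgt ba.
apply: (@atomic_moment_scale_ge1 _ N M (b / a) rho w sig v) => //.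
- by rewrite divr_ge0 // ltW.
- by rewrite sig_mass.
move=> k kN; have a_neq0 : (a ^+ k)%:C != 0 :> R[i] by rewrite gt_eqF // ltcR exprn_gt0.
apply: (mulfI a_neq0); rewrite /atomic_moment expr1n mul1r mulrA -rmorphM -exprMn.
rewrite [a * _]mulrC divfK ?gt_eqF // -[LHS]/(atomic_moment a rho w k).
by rewrite -[RHS]/(atomic_moment b sig v k) -momN // momM // (leq_trans kN NM).
Qed.

End Moments.

Theorem mainTheorem7 (R : realType)
    (nu : {finite_measure set (R * R)%type -> \bar R})
    (r : nat -> R) :
  nu (~` unit_circle) = 0%E ->
  ~ finite_set (msupport nu) ->
  (forall N : nat, (0 < N)%N -> (0 <= r N < 1) /\ solvable nu N (r N)) ->
  (forall N M : nat, (0 < N)%N -> (N <= M)%N -> r N <= r M) /\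
  (exists l : R, 0 <= l <= 1 /\ r @ \oo --> l).
Proof.
move=> _ /infinite_setN0/mass_gt0 mass_gt0 hr.
have r_bound N : (0 < N)%N -> 0 <= r N <= 1.
  by case/hr => /andP[r0 /ltW r1] _; rewrite r0 r1.
have r_mono N M : (0 < N)%N -> (N <= M)%N -> r N <= r M.
  move=> N0 NM; have [_ solN] := hr N N0.
  have [/andP[rM0 _] solM] := hr M (leq_trans N0 NM).
  exact: solvable_radius_le NM rM0 mass_gt0 solN solM.
split=> //; pose u n := r n.+1.
have u_mono : nondecreasing_seq u by move=> n m nm; exact: r_mono.
have u_cvg : cvgn u.
  by apply: nondecreasing_is_cvgn => //; exists 1 => _ [n _ <-]; case/andP: (r_bound n.+1 isT).
exists (limn u); split; last by rewrite -cvg_shiftS.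
apply/andP; split.
  by apply: limr_ge => //; near=> n; case/andP: (r_bound n.+1 isT).
by apply: limr_le => //; near=> n; case/andP: (r_bound n.+1 isT).
Unshelve. all: by end_near.
Qed.
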